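(* Assume $S$ is symmetric. Then for every integer $k\ge0$, $F_k=F_k^+F_k^-$. Moreover, let $k\ge1$ with $F_{k+1}\neq0$ (so that $1-A_k$ is invertible and $F^\pm_{k+1}\ne0$) and put $E_{k,\ell}:=[(1-A_k)^{-1}]_{0,\ell}$ for $0\le\ell\le k$. Then for every $\ell$ with $0\le\ell<k/2$, $$E_{k,\ell}+E_{k,k-\ell}=\frac{F^+_{k,\ell}}{F^+_{k+1}},\qquad E_{k,\ell}-E_{k,k-\ell}=\frac{F^-_{k,\ell}}{F^-_{k+1}},$$ and if $k$ is even, $E_{k,k/2}=F^+_{k,k/2}/F^+_{k+1}$.
   Context: Let $S$ be a finite set of integers with $a:=\max S\ge1$; $S$ is called symmetric if $-S=S$ and $\omega_{-s}=\omega_s$ for all $s\in S$, where each $s\in S$ carries a weight $\omega_s$ in a field $K$ of characteristic $0$; set $\omega_s:=0$ for $s\notin S$. For $k\ge0$, $A_k$ is the $(k+1)\times(k+1)$ matrix with rows and columns indexed by $0,\dots,k$ whose $(i,j)$ entry is $\omega_{j-i}$; $F_0:=1$ and $F_k:=\det(1-A_{k-1})$ for $k\ge1$. (For formal weights, $E_{k,\ell}$ is the weighted generating function of paths with steps in $S$ from $0$ to $\ell$ staying within $[0,k]$.) For $k\ge0$, $A_k^+$ is the matrix with rows and columns indexed by the integers $0\le i,j\le k/2$ and entries $\omega_{j-i}+\omega_{k-j-i}$ if $j<k/2$ and $\omega_{j-i}$ if $j=k/2$; $A_k^-$ is the matrix with rows and columns indexed by the integers $0\le i,j<k/2$ and entries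 $\omega_{j-i}-\omega_{k-j-i}$. The determinant of an empty matrix is $1$. Put $F^\pm_0:=1$ and $F^\pm_k:=\det(1-A^\pm_{k-1})$ for $k\ge1$. For an index $\ell$ of $A^\pm_k$, $F^\pm_{k,\ell}$ is the $(\ell,0)$ cofactor of $1-A_k^\pm$, i.e. $(-1)^\ell$ times the determinant of $1-A_k^\pm$ with row $\ell$ and column $0$ deleted. *)

From HB Require Import structures.
From mathcomp Require Import all_boot all_order all_algebra.
Set Implicit Arguments. Unset Strict Implicit. Unset Printing Implicit Defensive.
Import Order.TTheory GRing.Theory Num.Theory.
Local Open Scope ring_scope.

(* Weights are a function om : int -> K (om s = omega_s; zero off S). *)
Section Walks.
Variable K : fieldType.
Variable om : int -> K.

Definition Amat (k : nat) : 'M[K]_(k.+1) :=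
  \matrix_(i < k.+1, j < k.+1) om (j%:Z - i%:Z).

(* A_k^+ : indices 0 <= i,j <= k/2, i.e. 0 <= i,j <= k./2 *)
Definition Aplus (k : nat) : 'M[K]_((k./2).+1) :=
  \matrix_(i < (k./2).+1, j < (k./2).+1)
    (if (2 * j < k)%N then om (j%:Z - i%:Z) + om (k%:Z - j%:Z - i%:Z)
     else om (j%:Z - i%:Z)).

(* A_k^- : indices 0 <= i,j < k/2, i.e. 0 <= i,j < (k+1)./2 *)
Definition Aminus (k : nat) : 'M[K]_((k.+1)./2) :=
  \matrix_(i < (k.+1)./2, j < (k.+1)./2)
    (om (j%:Z - i%:Z) - om (k%:Z - j%:Z - i%:Z)).

Definition Fk (k : nat) : K :=
  if k is k'.+1 then \det (1%:M - Amat k') else 1.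
Definition Fplus (k : nat) : K :=
  if k is k'.+1 then \det (1%:M - Aplus k') else 1.
Definition Fminus (k : nat) : K :=
  if k is k'.+1 then \det (1%:M - Aminus k') else 1.

(* (l,0) cofactor of a square matrix, for a natural index l (0 if out of range) *)
Definition cof_l0 n (M : 'M[K]_n) (l : nat) : K :=
  match (insub l : option 'I_n), (insub 0%N : option 'I_n) with
  | Some i, Some j => cofactor M i j
  | _, _ => 0
  end.

Definition Fplus_kl (k l : nat) : K := cof_l0 (1%:M - Aplus k) l.
Definition Fminus_kl (k l : nat) : K := cof_l0 (1%:M - Aminus k) l.

Definition Ekl (k l : nat) : K := invmx (1%:M - Amat k) ord0 (inord l).

End Walks.

(* Let J be the reflection i |-> k - i of {0, ..., k}.  When the weights are
   symmetric (om (-s) = om s) the matrix A_k commutes with J, so the space of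
   column vectors splits into J-even and J-odd vectors.  The J-even vectors have
   the basis e_a + e_(k-a) (2a < k) together with e_(k/2) (k even): these are the
   columns of [Tplus k]; the J-odd vectors have the basis e_b - e_(k-b) (2b < k):
   the columns of [Tminus k].  We show A_k Tplus = Tplus A_k^+ and
   A_k Tminus = Tminus A_k^-; rescaled transposes [Uplus], [Uminus] are explicit
   left inverses (they divide by 2, which characteristic 0 allows), so that [Tplus Tminus]
   is invertible and conjugates 1 - A_k into diag(1 - A_k^+, 1 - A_k^-).  Taking
   determinants gives F_k = F_k^+ F_k^-.  If 1 - A_k is invertible, the
   intertwining passes to the inverses; reading off row 0 of
   (1 - A_k)^-1 T = T (1 - A_k^pm)^-1 and writing (1 - A_k^pm)^-1 through
   cofactors gives the formulas for E_(k,l) + E_(k,k-l) and E_(k,l) - E_(k,k-l). *)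

From HB Require Import structures.
From mathcomp Require Import all_boot all_order all_algebra zify ring.
Set Implicit Arguments. Unset Strict Implicit. Unset Printing Implicit Defensive.
Import GRing.Theory.
Local Open Scope ring_scope.

Ltac decide_nat_tests :=
  repeat match goal with
  | |- context [ ?b1 && ?b2 ] =>
        first [ rewrite (_ : b1 && b2 = true); last by lia
              | rewrite (_ : b1 && b2 = false); last by lia ]
  | |- context [ @eq_op _ ?x ?y ] =>
      lazymatch type of x with nat =>
        first [ rewrite (_ : (x == y) = true); last by lia
              | rewrite (_ : (x == y) = false); last by lia ] end
  | |- context [ leq ?x ?y ] =>
        first [ rewrite (_ : leq x y = true); last by lia
              | rewrite (_ : leq x y = false); last by lia ]
  end.

Ltac simp_ring := rewrite /= ?(mulr1n, mulr0n, addr0, add0r, subr0, sub0r,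
  mulr0, mul0r, mulr1, mul1r, mulrN1, mulN1r, oppr0, opprK, subrr) //.

(* The halves m./2 and uphalf m = (m.+1)./2, described in terms lia understands. *)
Ltac half_facts m :=
  have := odd_double_half m; have := uphalf_half m; move=> ? ?.

Lemma ord_neq n (i j : 'I_n) : i != j -> (i : nat) != j.
Proof. by apply: contra_neq; apply: val_inj. Qed.

Section MatrixEntries.
Variable R : pzSemiRingType.

Lemma mulmx_row_single n p r (T : 'M[R]_(n, p)) (B : 'M_(p, r)) i j0 a :
  (forall j, j != j0 -> T i j = 0) -> (T *m B) i a = T i j0 * B j0 a.
Proof.
move=> T0; rewrite mxE (bigD1 j0) //= big1 ?addr0 // => j /T0 ->.
exact: mul0r.
Qed.

Lemma mulmx_col_single n p r (B : 'M[R]_(n, p)) (T : 'M_(p, r)) i j0 a :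
  (forall j, j != j0 -> T j a = 0) -> (B *m T) i a = B i j0 * T j0 a.
Proof.
move=> T0; rewrite mxE (bigD1 j0) //= big1 ?addr0 // => j /T0 ->.
exact: mulr0.
Qed.

Lemma mulmx_col_pair n p r (B : 'M[R]_(n, p)) (T : 'M_(p, r)) i j0 j1 a :
  j1 != j0 -> (forall j, j != j0 -> j != j1 -> T j a = 0) ->
  (B *m T) i a = B i j0 * T j0 a + B i j1 * T j1 a.
Proof.
move=> j10 T0; rewrite mxE (bigD1 j0) //= (bigD1 j1) //= big1 ?addr0 // => j.
by case/andP=> /T0 T0j /T0j ->; rewrite mulr0.
Qed.

End MatrixEntries.

Section Intertwining.
Variable R : comUnitRingType.

(* If [Tp Tq] has the left inverse [Up; Uq] and M Tp = Tp Mp, M Tq = Tq Mq,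
   then M is similar to diag(Mp, Mq), hence det M = det Mp * det Mq. *)
Lemma det_intertwine_blocks n p q (e : n = (p + q)%N) (M : 'M[R]_n) (Mp : 'M_p)
    (Mq : 'M_q) (Tp : 'M_(n, p)) (Tq : 'M_(n, q)) (Up : 'M_(p, n)) (Uq : 'M_(q, n)) :
  M *m Tp = Tp *m Mp -> M *m Tq = Tq *m Mq ->
  Up *m Tp = 1%:M -> Up *m Tq = 0 -> Uq *m Tp = 0 -> Uq *m Tq = 1%:M ->
  \det M = \det Mp * \det Mq.
Proof.
subst n => MTp MTq UTpp UTpq UTqp UTqq.
have UT1 : col_mx Up Uq *m row_mx Tp Tq = 1%:M.
  by rewrite mul_col_row UTpp UTpq UTqp UTqq -scalar_mx_block.
have [_] := mulmx1_unit UT1; rewrite unitmxE => Tunit.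
have MT : M *m row_mx Tp Tq = row_mx Tp Tq *m block_mx Mp 0 0 Mq.
  by rewrite mul_mx_row mul_row_block !mulmx0 addr0 add0r MTp MTq.
have := congr1 determinant MT; rewrite !det_mulmx det_ublock [_ * (_ * _)]mulrC.
exact: mulIr.
Qed.

Lemma invmx_intertwine n p (M : 'M[R]_n) (Mp : 'M_p) (T : 'M_(n, p)) :
  M \in unitmx -> Mp \in unitmx -> M *m T = T *m Mp ->
  invmx M *m T = T *m invmx Mp.
Proof.
move=> Munit Mpunit MT.
by rewrite -[LHS]mulmx1 -(mulmxV Mpunit) !mulmxA -[_ *m T *m Mp]mulmxA -MT mulmxA
  mulVmx // mul1mx.
Qed.

Lemma invmx_entry n (M : 'M[R]_n) i j :
  M \in unitmx -> invmx M i j = cofactor M j i / \det M.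
Proof. by move=> Munit; rewrite /invmx Munit !mxE mulrC. Qed.

End Intertwining.

Section Reflection.
Variables (K : fieldType) (m : nat).

Lemma half_ltS : ((m./2).+1 <= m.+1)%N.
Proof. by half_facts m; lia. Qed.

Lemma uphalf_ltS : (uphalf m <= m.+1)%N.
Proof. by half_facts m; lia. Qed.

(* Column a of Tplus is e_a + e_(m-a) if 2a < m, and e_a if 2a = m. *)
Definition Tplus : 'M[K]_(m.+1, (m./2).+1) :=
  \matrix_(i, a) (((i : nat) == a)%:R + ((i + a == m)%N && (2 * a < m)%N)%:R).

(* Column b of Tminus is e_b - e_(m-b), for 2b < m. *)
Definition Tminus : 'M[K]_(m.+1, uphalf m) :=
  \matrix_(i, b) (((i : nat) == b)%:R - (i + b == m)%N%:R).

Lemma Tplus_col n (B : 'M[K]_(n, m.+1)) i a :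
  (B *m Tplus) i a = B i (widen_ord half_ltS a)
                     + (2 * a < m)%N%:R * B i (rev_ord (widen_ord half_ltS a)).
Proof.
half_facts m; have ha := ltn_ord a.
case: (ltnP (2 * a) m) => h2a.
- rewrite (mulmx_col_pair _ _ (j0 := widen_ord half_ltS a) (j1 := rev_ord (widen_ord half_ltS a))).
  + by rewrite !mxE /=; decide_nat_tests; simp_ring.
  + by apply/eqP => /(congr1 val) /=; lia.
  + move=> j' /ord_neq /= h0 /ord_neq /= h1; rewrite mxE.
    by have hj' := ltn_ord j'; decide_nat_tests; simp_ring.
- rewrite (mulmx_col_single _ _ (j0 := widen_ord half_ltS a)) => [|j' /ord_neq /= nj].
  + by rewrite !mxE /=; decide_nat_tests; simp_ring.
  + by rewrite mxE; decide_nat_tests; simp_ring.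
Qed.

Lemma Tminus_col n (B : 'M[K]_(n, m.+1)) i b :
  (B *m Tminus) i b = B i (widen_ord uphalf_ltS b)
                      - B i (rev_ord (widen_ord uphalf_ltS b)).
Proof.
half_facts m; have hb := ltn_ord b.
rewrite (mulmx_col_pair _ _ (j0 := widen_ord uphalf_ltS b)
                            (j1 := rev_ord (widen_ord uphalf_ltS b))).
- by rewrite !mxE /=; decide_nat_tests; simp_ring.
- by apply/eqP => /(congr1 val) /=; lia.
- move=> j' /ord_neq /= h0 /ord_neq /= h1; rewrite mxE.
  by have hj' := ltn_ord j'; decide_nat_tests; simp_ring.
Qed.

Lemma Tplus_row n (B : 'M[K]_((m./2).+1, n)) (i : 'I_m.+1) (j : 'I_(m./2).+1) a :
  i = j :> nat -> (Tplus *m B) i a = B j a.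
Proof.
half_facts m; have hj := ltn_ord j => hij.
rewrite (mulmx_row_single _ _ (j0 := j)) => [|j' /ord_neq nj].
- by rewrite mxE; decide_nat_tests; simp_ring.
- by have hj' := ltn_ord j'; rewrite mxE; decide_nat_tests; simp_ring.
Qed.

Lemma Tplus_row_rev n (B : 'M[K]_((m./2).+1, n)) (i : 'I_m.+1) (j : 'I_(m./2).+1) a :
  (i + j = m)%N -> (2 * j < m)%N -> (Tplus *m B) i a = B j a.
Proof.
half_facts m; have hj := ltn_ord j => hij h2j.
rewrite (mulmx_row_single _ _ (j0 := j)) => [|j' /ord_neq nj].
- by rewrite mxE; decide_nat_tests; simp_ring.
- by have hj' := ltn_ord j'; rewrite mxE; decide_nat_tests; simp_ring.
Qed.

Lemma Tminus_row n (B : 'M[K]_(uphalf m, n)) (i : 'I_m.+1) (j : 'I_(uphalf m)) b :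
  (forall j' : nat, (j' < uphalf m)%N -> i = j' :> nat \/ (i + j' = m)%N -> j' = j) ->
  (Tminus *m B) i b = ((i == j :> nat)%:R - (i + j == m)%N%:R) * B j b.
Proof.
move=> uniq_j; rewrite (mulmx_row_single _ _ (j0 := j)) ?mxE // => j' /ord_neq nj.
have eq_j : i = j' :> nat \/ (i + j' = m)%N -> j' == j.
  by move=> h; apply/eqP/val_inj/(uniq_j _ (ltn_ord j') h).
have /negbTE i_j' : (i : nat) != j' by apply: contra nj => /eqP e; apply: eq_j; left.
have /negbTE ij'_m : (i + j' != m)%N by apply: contra nj => /eqP e; apply: eq_j; right.
by rewrite mxE i_j' ij'_m; simp_ring.
Qed.

Variable om : int -> K.
Hypothesis om_even : forall z, om (- z) = om z.

Lemma om_opp_eq x y : x = - y -> om x = om y.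
Proof. by move->; rewrite om_even. Qed.

Lemma Amat_Tplus : Amat om m *m Tplus = Tplus *m Aplus om m.
Proof.
half_facts m; apply/matrixP => i a; have ha := ltn_ord a; have hi := ltn_ord i.
rewrite Tplus_col; case: (leqP (2 * i) m) => hi2.
- have hj : (i < (m./2).+1)%N by lia.
  rewrite (Tplus_row _ (j := Ordinal hj)) // !mxE /=.
  by case: ifP => h2a; simp_ring; congr (_ + om _); lia.
- have hj : (m - i < (m./2).+1)%N by lia.
  rewrite (Tplus_row_rev _ (j := Ordinal hj)) /=; try lia.
  rewrite !mxE /=; case: ifP => h2a; simp_ring.
  + by rewrite addrC; congr (_ + _); apply: om_opp_eq; lia.
  + by apply: om_opp_eq; lia.
Qed.

Lemma Amat_Tminus : Amat om m *m Tminus = Tminus *m Aminus om m.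
Proof.
half_facts m; apply/matrixP => i b; have hb := ltn_ord b; have hi := ltn_ord i.
rewrite Tminus_col; case: (ltnP (2 * i) m) => hi2; last case: (ltnP m (2 * i)) => hi2'.
- have hj : (i < uphalf m)%N by lia.
  rewrite (Tminus_row _ (j := Ordinal hj)) /=; last by move=> *; lia.
  by rewrite !mxE /=; decide_nat_tests; simp_ring; congr (_ - om _); lia.
- have hj : (m - i < uphalf m)%N by lia.
  rewrite (Tminus_row _ (j := Ordinal hj)) /=; last by move=> *; lia.
  rewrite !mxE /=; decide_nat_tests; simp_ring.
  by rewrite opprB; congr (_ - _); apply: om_opp_eq; lia.
- rewrite (Tminus_row _ (j := b)) /=; last by move=> *; lia.
  rewrite !mxE /=; decide_nat_tests; simp_ring.
  by apply/eqP; rewrite subr_eq0; apply/eqP/om_opp_eq; lia.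
Qed.

Hypothesis two_neq0 : 2%:R != 0 :> K.

Lemma half_add_half : 2^-1 + 2^-1 = 1 :> K.
Proof. by field. Qed.

(* Left inverses of Tplus and Tminus: rescaled transposes, which need 1/2. *)
Definition Uplus : 'M[K]_((m./2).+1, m.+1) :=
  \matrix_(a, j) ((if (2 * a < m)%N then 2^-1 else 1) * Tplus j a).

Definition Uminus : 'M[K]_(uphalf m, m.+1) := \matrix_(b, j) (2^-1 * Tminus j b).

(* Together the four products say that [Uplus; Uminus] [Tplus Tminus] = 1. *)
Lemma Uplus_Tplus : Uplus *m Tplus = 1%:M.
Proof.
half_facts m; apply/matrixP => a c; have ha := ltn_ord a; have hc := ltn_ord c.
rewrite Tplus_col !mxE /=.
case: (eqVneq a c) => [<-|nac]; last have hac := ord_neq nac;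
  rewrite ?eqxx ?(negbTE nac); case: ifP => h2a; decide_nat_tests; simp_ring.
by rewrite half_add_half.
Qed.

Lemma Uplus_Tminus : Uplus *m Tminus = 0.
Proof.
half_facts m; apply/matrixP => a c; have ha := ltn_ord a; have hc := ltn_ord c.
rewrite Tminus_col !mxE /=.
case: (eqVneq (a : nat) c) => hac; case: ifP => h2a; decide_nat_tests; simp_ring.
Qed.

Lemma Uminus_Tplus : Uminus *m Tplus = 0.
Proof.
half_facts m; apply/matrixP => b a; have ha := ltn_ord a; have hb := ltn_ord b.
rewrite Tplus_col !mxE /=.
case: (eqVneq (a : nat) b) => hab; decide_nat_tests; simp_ring.
Qed.

Lemma Uminus_Tminus : Uminus *m Tminus = 1%:M.
Proof.
half_facts m; apply/matrixP => b c; have hb := ltn_ord b; have hc := ltn_ord c.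
rewrite Tminus_col !mxE /=.
case: (eqVneq b c) => [<-|nbc]; last have hbc := ord_neq nbc;
  rewrite ?eqxx ?(negbTE nbc); decide_nat_tests; simp_ring.
by rewrite half_add_half.
Qed.

End Reflection.

Section SymmetricWalks.
Variables (K : fieldType) (om : int -> K).
Hypothesis om_even : forall z, om (- z) = om z.
Hypothesis two_neq0 : 2%:R != 0 :> K.

Lemma one_sub_intertwine n p (A : 'M[K]_n) (Ap : 'M_p) (T : 'M_(n, p)) :
  A *m T = T *m Ap -> (1%:M - A) *m T = T *m (1%:M - Ap).
Proof. by move=> AT; rewrite mulmxBl mulmxBr mul1mx mulmx1 AT. Qed.

Lemma det_factor m :
  \det (1%:M - Amat om m) = \det (1%:M - Aplus om m) * \det (1%:M - Aminus om m).
Proof.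
have e : m.+1 = ((m./2).+1 + uphalf m)%N by half_facts m; lia.
apply: (det_intertwine_blocks e (Tp := Tplus K m) (Tq := Tminus K m)
                                (Up := Uplus K m) (Uq := Uminus K m)).
- exact/one_sub_intertwine/Amat_Tplus.
- exact/one_sub_intertwine/Amat_Tminus.
- exact: Uplus_Tplus.
- exact: Uplus_Tminus.
- exact: Uminus_Tplus.
- exact: Uminus_Tminus.
Qed.

Lemma walk_units k : Fk om k.+1 != 0 ->
  [/\ 1%:M - Amat om k \in unitmx, 1%:M - Aplus om k \in unitmx
     & 1%:M - Aminus om k \in unitmx].
Proof.
rewrite /= det_factor mulf_eq0 negb_or => /andP[Fp_neq0 Fm_neq0].
by rewrite !unitmxE !unitfE det_factor mulf_neq0.
Qed.

Lemma Ekl_ordE k l (j : 'I_k.+1) :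
  j = l :> nat -> Ekl om k l = invmx (1%:M - Amat om k) ord0 j.
Proof. by move=> <-; rewrite /Ekl inord_val. Qed.

Lemma cof_l0E n (M : 'M[K]_n) (i j : 'I_n) : j = 0%N :> nat -> cof_l0 M i = cofactor M i j.
Proof.
move=> j0; rewrite /cof_l0 valK; case: insubP => [j' _ ej'|]; last by rewrite -j0 ltn_ord.
by congr cofactor; apply: val_inj; rewrite ej'.
Qed.

(* Row 0 of (1 - A_k)^-1 Tplus = Tplus (1 - A_k^+)^-1, at column l <= k/2. *)
Lemma Ekl_plus k l : (l <= k./2)%N -> Fk om k.+1 != 0 ->
  Ekl om k l + (2 * l < k)%N%:R * Ekl om k (k - l) = Fplus_kl om k l / Fplus om k.+1.
Proof.
move=> hl /walk_units[Aunit Apunit _]; half_facts k.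
have hl' : (l < (k./2).+1)%N by [].
have hrel : invmx (1%:M - Amat om k) *m Tplus K k = Tplus K k *m invmx (1%:M - Aplus om k).
  exact/invmx_intertwine/one_sub_intertwine/Amat_Tplus.
have := congr1 (fun X : 'M[K]_(k.+1, (k./2).+1) => X ord0 (Ordinal hl')) hrel.
rewrite Tplus_col (Tplus_row _ (j := ord0)) //= => E.
rewrite (Ekl_ordE (j := widen_ord (half_ltS k) (Ordinal hl'))) //.
rewrite (Ekl_ordE (j := rev_ord (widen_ord (half_ltS k) (Ordinal hl')))) /=; last by lia.
by rewrite E invmx_entry // /Fplus_kl (cof_l0E _ (Ordinal hl') (j := ord0)).
Qed.

(* Row 0 of (1 - A_k)^-1 Tminus = Tminus (1 - A_k^-)^-1, at column l < k/2. *)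
Lemma Ekl_minus k l : (0 < k)%N -> (2 * l < k)%N -> Fk om k.+1 != 0 ->
  Ekl om k l - Ekl om k (k - l) = Fminus_kl om k l / Fminus om k.+1.
Proof.
move=> k_gt0 hl /walk_units[Aunit _ Amunit]; half_facts k.
have hl' : (l < uphalf k)%N by lia.
have h0 : (0 < uphalf k)%N by lia.
have hrel : invmx (1%:M - Amat om k) *m Tminus K k = Tminus K k *m invmx (1%:M - Aminus om k).
  exact/invmx_intertwine/one_sub_intertwine/Amat_Tminus.
have := congr1 (fun X : 'M[K]_(k.+1, uphalf k) => X ord0 (Ordinal hl')) hrel.
rewrite Tminus_col (Tminus_row _ (j := Ordinal h0)) /=; last by move=> *; lia.
decide_nat_tests; simp_ring => E.
rewrite (Ekl_ordE (j := widen_ord (uphalf_ltS k) (Ordinal hl'))) //.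
rewrite (Ekl_ordE (j := rev_ord (widen_ord (uphalf_ltS k) (Ordinal hl')))) /=; last by lia.
by rewrite E invmx_entry // /Fminus_kl (cof_l0E _ (Ordinal hl') (j := Ordinal h0)).
Qed.

End SymmetricWalks.

(* Characteristic 0 gives the division by 2 needed for Uplus and Uminus. *)
Lemma two_neq0_of_char0 (K : fieldType) : [pchar K] =i pred0 -> 2%:R != 0 :> K.
Proof.
move=> char0; apply/negP => /(@natf0_pchar _ 2) [//|p].
by rewrite char0.
Qed.

Lemma symmetric_weights_even (V : nmodType) (S : seq int) (om : int -> V) :
  (forall s, s \notin S -> om s = 0) -> (forall s, s \in S -> - s \in S) ->
  (forall s, s \in S -> om (- s) = om s) -> forall z, om (- z) = om z.
Proof.
move=> supp symS symw z; case: (boolP (z \in S)) => [/symw //|zNS].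
have nzNS : - z \notin S by apply: contra zNS => /symS; rewrite opprK.
by rewrite !supp.
Qed.

Theorem mainTheorem11 (K : fieldType) (S : seq int) (om : int -> K)
  (hchar : [pchar K] =i pred0)
  (hsupp : forall s : int, s \notin S -> om s = 0)
  (hmax : has (fun s : int => 1 <= s) S)
  (hsymS : forall s : int, s \in S -> - s \in S)
  (hsymw : forall s : int, s \in S -> om (- s) = om s) :
  (forall k : nat, Fk om k = Fplus om k * Fminus om k) /\
  (forall k : nat, (1 <= k)%N -> Fk om k.+1 != 0 ->
     (forall l : nat, (2 * l < k)%N ->
        Ekl om k l + Ekl om k (k - l) = Fplus_kl om k l / Fplus om k.+1 /\
        Ekl om k l - Ekl om k (k - l) = Fminus_kl om k l / Fminus om k.+1) /\
     (~~ odd k -> Ekl om k k./2 = Fplus_kl om k k./2 / Fplus om k.+1)).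
Proof.
have om_even := symmetric_weights_even hsupp hsymS hsymw.
have two := two_neq0_of_char0 hchar.
split=> [[|k]|k k_gt0 Fk_neq0]; first by rewrite /= mulr1.
  exact: (det_factor om_even two k).
have hk := odd_double_half k; split=> [l hl|k_even].
  split; last exact: Ekl_minus.
  by rewrite -(Ekl_plus om_even two _ Fk_neq0) ?hl ?mul1r //; lia.
rewrite (negbTE k_even) in hk.
rewrite -(Ekl_plus om_even two _ Fk_neq0) //.
by rewrite (_ : (2 * k./2 < k)%N = false) ?mul0r ?addr0 //; lia.
Qed.
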